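(* Let $p(\cdot),q(\cdot),r(\cdot)\in\mathcal{P}(\mathbb{R}^n)$ satisfy $\frac{1}{r(x)}=\frac{1}{p(x)}+\frac{1}{q(x)}$, and assume either $r(\cdot)<p(\cdot)<\infty$, or $r(\cdot)\le p(\cdot)<\infty$ with $r^+<\infty$. For measurable $f$ set $\|f\|^*_{p(\cdot)}=\sup_{\|g\|_{q(\cdot)}\le1}\|fg\|_{r(\cdot)}$. Then $\|f\|^*_{p(\cdot)}\approx\|f\|_{p(\cdot)}$, i.e. there are constants $c_1,c_2>0$ independent of $f$ with $c_1\|f\|_{p(\cdot)}\le\|f\|^*_{p(\cdot)}\le c_2\|f\|_{p(\cdot)}$.
   Context: $\mathcal{P}(\mathbb{R}^n)$: measurable $p(\cdot):\mathbb{R}^n\to[1,\infty]$; $p^+$ essential supremum. $\|f\|_{p(\cdot)}=\inf\{\lambda>0:\int_{\{p<\infty\}}|f/\lambda|^{p(x)}dx+\|(f/\lambda)\chi_{\{p=\infty\}}\|_\infty\le1\}$. *)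

From mathcomp Require Import all_boot all_algebra.
From mathcomp Require Import all_classical all_reals all_analysis measurable_realfun ess_sup_inf.
Import GRing.Theory Num.Theory.
Import numFieldNormedType.Exports.

Set Implicit Arguments.
Unset Strict Implicit.
Unset Printing Implicit Defensive.

Local Open Scope classical_set_scope.
Local Open Scope ring_scope.
Local Open Scope ereal_scope.

(* R^n is modelled as n.-tuple R, with the product (= Borel) sigma-algebra
   provided by MathComp-Analysis.  The n-dimensional Lebesgue measure is
   characterised as the (unique) measure that is the n-fold product of the
   one-dimensional Lebesgue measure on measurable rectangles. *)
Definition is_lebesgue_n (R : realType) (n : nat)
    (mu : {measure set (n.-tuple R) -> \bar R}) : Prop :=
  forall A : 'I_n -> set R, (forall i, measurable (A i)) ->
    mu [set t | forall i, A i (tnth t i)] =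
      \big[*%E/1%E]_(i < n) lebesgue_measure (A i).

Definition var_exponent (R : realType) (n : nat)
    (p : n.-tuple R -> \bar R) : Prop :=
  measurable_fun setT p /\ forall x, 1 <= p x.

(* 1/p with the convention 1/oo = 0 (exponents are >= 1). *)
Definition einv (R : realType) (a : \bar R) : R :=
  match a with EFin r => r^-1 | _ => 0%R end.

Definition modular (R : realType) (n : nat)
    (mu : {measure set (n.-tuple R) -> \bar R})
    (p : n.-tuple R -> \bar R) (f : n.-tuple R -> R) : \bar R :=
  (\int[mu]_(x in [set x | p x < +oo]) ((`|f x| `^ fine (p x))%R)%:E)
  + ess_sup mu (fun x => if p x == +oo then (`|f x|)%:E else 0).

(* Luxemburg norm ||f||_{p(.)} (equal to +oo if no lambda works). *)
Definition vnorm (R : realType) (n : nat)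
    (mu : {measure set (n.-tuple R) -> \bar R})
    (p : n.-tuple R -> \bar R) (f : n.-tuple R -> R) : \bar R :=
  ereal_inf [set lam%:E | lam in
    [set lam : R | (0 < lam)%R /\ modular mu p (fun x => f x / lam)%R <= 1]].

Definition dual_vnorm (R : realType) (n : nat)
    (mu : {measure set (n.-tuple R) -> \bar R})
    (q r : n.-tuple R -> \bar R) (f : n.-tuple R -> R) : \bar R :=
  ereal_sup [set vnorm mu r (fun x => f x * g x)%R | g in
    [set g : n.-tuple R -> R | measurable_fun setT g /\ vnorm mu q g <= 1]].

(* Upper bound: as 1/r = 1/p + 1/q, Young's inequality gives (ab)^r <= a^p + b^q
   pointwise (and b <= 1 a.e. where q = oo), so modulars rho_p(f/l) <= 1 and
   rho_q(g/m) <= 1 force rho_r(fg/(2lm)) <= 1, i.e. ||fg||_r <= 2 ||f||_p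
   whenever ||g||_q <= 1.
   Lower bound: if l < ||f||_p then rho_p(f/l) > 1, and by sigma-finiteness some
   set E carries a finite M = int_E |f/l|^p > 1.  The norming function
   g = 2^-1 |f/l|^(p/q) M^(-1/q) 1_E has rho_q(g) <= 1, while on E
   |fg/s|^r >= (l/2s) |f/l|^p / M, so ||fg||_r >= l/2.
   Hence ||f||_p / 2 <= ||f||*_p <= 2 ||f||_p. *)

From mathcomp Require Import all_boot all_algebra.
From mathcomp Require Import all_classical all_reals all_analysis measurable_realfun ess_sup_inf.
From mathcomp Require Import ring lra.
Import order.Order.TTheory GRing.Theory Num.Theory.

Set Implicit Arguments.
Unset Strict Implicit.
Unset Printing Implicit Defensive.

Local Open Scope classical_set_scope.
Local Open Scope ring_scope.

Section measurable_powR.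
Context d (T : measurableType d) (R : realType).
Implicit Types (a b h : T -> R) (p : T -> \bar R).

Lemma measurable_fun_powR a b : measurable_fun setT a -> measurable_fun setT b ->
  measurable_fun setT (fun x => a x `^ b x).
Proof.
move=> ma mb; rewrite /powR.
apply: (measurable_fun_ifT (f := fun x => a x == 0)).
- exact: measurable_fun_eqr.
- rewrite (_ : (fun x => _) = (fun x => if b x == 0 then 1 else 0)); last first.
    by apply: funext => x; case: (b x == 0).
  by apply: (measurable_fun_ifT (f := fun x => b x == 0));
    [exact: measurable_fun_eqr|exact: measurable_cst|exact: measurable_cst].
- apply: measurableT_comp; first exact: measurable_expR.
  by apply: measurable_funM => //; exact: measurableT_comp.
Qed.

Lemma measurable_fun_norm_powR h p : measurable_fun setT h -> measurable_fun setT p ->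
  measurable_fun setT (fun x => `|h x| `^ fine (p x)).
Proof.
move=> mh mp; apply: measurable_fun_powR; last exact: measurableT_comp.
exact: measurableT_comp mh.
Qed.

Lemma measurable_fun_einv p : measurable_fun setT p -> (forall x, (0 <= p x)%E) ->
  measurable_fun setT (fun x => einv (p x)).
Proof.
move=> mp p0.
rewrite (_ : (fun x => _) = (fun x => fine (p x) `^ (-1))); last first.
  apply: funext => x; move: (p0 x).
  case: (p x) => [s||] //=; rewrite ?lee_fin => s0; first by rewrite powR_inv1.
  by rewrite powR0 // oppr_eq0 oner_eq0.
by apply: measurable_fun_powR; [exact: measurableT_comp|exact: measurable_cst].
Qed.

End measurable_powR.

Section pointwise_powR.
Variable R : realType.
Implicit Types a b k s M P Q Rr iq : R.

Lemma half_powR_le s : 1 <= s -> (2^-1 : R) `^ s <= 2^-1.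
Proof. by move=> s1; apply: ge1r_powR => //; rewrite invr_gt0 ltr0n /= invf_le1 // ler1n. Qed.

(* Young's inequality [conjugate_powR] for the conjugate exponents [P/Rr] and [Q/Rr]. *)
Lemma young_powR a b P Q Rr : 0 <= a -> 0 <= b -> 0 < P -> 0 < Q -> 0 < Rr ->
  Rr^-1 = P^-1 + Q^-1 -> (a * b) `^ Rr <= a `^ P + b `^ Q.
Proof.
move=> a0 b0 P0 Q0 R0 hR.
have le_RP : Rr / P <= 1.
  by rewrite ler_pdivrMr // mul1r -(lef_pV2 (x := P)) ?posrE // hR lerDl invr_ge0 ltW.
have le_RQ : Rr / Q <= 1.
  by rewrite ler_pdivrMr // mul1r -(lef_pV2 (x := Q)) ?posrE // hR lerDr invr_ge0 ltW.
rewrite powRM //.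
have := @conjugate_powR R (a `^ Rr) (b `^ Rr) (P / Rr) (Q / Rr) (powR_ge0 _ _)
  (powR_ge0 _ _) (divr_gt0 P0 R0) (divr_gt0 Q0 R0).
rewrite !invf_div -mulrDr -hR divff ?gt_eqF // => /(_ erefl) /le_trans; apply.
rewrite -!powRrM ![Rr * _]mulrC !divfK ?gt_eqF //.
by apply: lerD; apply: ler_piMr; rewrite ?powR_ge0 // mulrC.
Qed.

Lemma half_mul_powR_le (pe qe re : \bar R) a b : 0 <= a -> 0 <= b ->
  (1 <= pe)%E -> (1 <= qe)%E -> (1 <= re)%E -> (pe < +oo)%E -> (re < +oo)%E ->
  einv re = einv pe + einv qe -> (qe = +oo%E -> b <= 1) ->
  (2^-1 * (a * b)) `^ fine re <=
    2^-1 * (a `^ fine pe + (if (qe < +oo)%E then b `^ fine qe else 0)).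
Proof.
move=> a0 b0; case: pe => [P| |] //; case: re => [Rr| |] //.
rewrite !lee_fin /= => P1 q1 R1 _ _ hR bq.
have R0 : 0 < Rr by exact: lt_le_trans ltr01 R1.
rewrite powRM ?mulr_ge0 //; apply: ler_pM; rewrite ?powR_ge0 ?half_powR_le //.
move: q1 hR bq; case: qe => [Q| |] //=; rewrite ?lee_fin.
- move=> Q1 hR _; rewrite ltry; apply: young_powR => //; exact: lt_le_trans ltr01 _.
- move=> _; rewrite addr0 => /invr_inj -> /(_ erefl) b1.
  rewrite addr0 powRM // -[X in _ <= X]mulr1 ler_pM ?powR_ge0 //.
  have := @ge0_ler_powR R P (le_trans ler01 P1) b 1; rewrite powR1.
  by apply; rewrite ?nnegrE.
Qed.

Lemma ge1_fin_EFin (e : \bar R) : (1 <= e)%E -> (e < +oo)%E ->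
  exists2 s : R, e = s%:E & 1 <= s.
Proof. by case: e => // s; rewrite lee_fin => s1 _; exists s. Qed.

Lemma einv_ge0 (e : \bar R) : (0 <= e)%E -> 0 <= einv e.
Proof. by case: e => //= s; rewrite lee_fin invr_ge0. Qed.

Lemma einvD_lt_pinfty (pe qe re : \bar R) : (1 <= pe)%E -> (pe < +oo)%E -> (0 <= qe)%E ->
  einv re = einv pe + einv qe -> (re < +oo)%E.
Proof.
case: pe => [P| |] //; rewrite lee_fin => P1 _ /einv_ge0 iq0.
case: re => [s| |] //= /esym /eqP; first by rewrite ltry.
have P0 : 0 < P by exact: lt_le_trans ltr01 P1.
by rewrite paddr_eq0 ?invr_ge0 ?(ltW P0) // invr_eq0 gt_eqF.
Qed.

Lemma norming_powR_le a M P Q : 0 <= a -> 0 < M -> 1 <= Q ->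
  (2^-1 * (a `^ (P * Q^-1) * M `^ (- Q^-1))) `^ Q <= 2^-1 * (a `^ P / M).
Proof.
move=> a0 M0 Q1; have Q0 : 0 < Q by exact: lt_le_trans ltr01 Q1.
rewrite powRM ?mulr_ge0 ?invr_ge0 ?ler0n ?powR_ge0 //.
rewrite powRM ?powR_ge0 // -!powRrM mulfVK ?gt_eqF // mulNr mulVf ?gt_eqF //.
rewrite (powR_inv1 (ltW M0)) ler_pM ?half_powR_le //.
by rewrite mulr_ge0 ?powR_ge0 // invr_ge0 ltW.
Qed.

Lemma norming_mul_powR_ge a k M P Rr iq : 0 <= a -> 1 <= k -> 1 <= M ->
  0 < P -> 1 <= Rr -> 0 <= iq -> Rr^-1 = P^-1 + iq ->
  k * (a `^ P / M) <= (k * a * (a `^ (P * iq) * M `^ (- iq))) `^ Rr.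
Proof.
move=> a0 k1 M1 P0 R1 iq0 hR.
have R0 : 0 < Rr by exact: lt_le_trans ltr01 R1.
have M0 : 0 < M by exact: lt_le_trans ltr01 M1.
have k0 : 0 <= k by exact: le_trans ler01 k1.
have eP : Rr + P * iq * Rr = P.
  have -> : iq = Rr^-1 - P^-1 by rewrite hR addrC addKr.
  by field; rewrite ?gt_eqF.
rewrite !powRM ?mulr_ge0 ?powR_ge0 // -!powRrM.
rewrite -mulrA [a `^ Rr * _]mulrA -powRD; last by rewrite eP gt_eqF.
rewrite eP; apply: ler_pM => //.
- by rewrite mulr_ge0 ?powR_ge0 // invr_ge0 ltW.
- exact: le1r_powR.
rewrite ler_wpM2l ?powR_ge0 // -(powR_inv1 (ltW M0)) ler_powR //.
by rewrite mulNr lerN2 -(mulVf (lt0r_neq0 R0)) ler_pM2r // hR lerDr invr_ge0 ltW.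
Qed.

End pointwise_powR.

Local Open Scope ereal_scope.

Lemma lee_pmul_of_lt (R : realFieldType) (c : R) (v D : \bar R) :
  (0 < c)%R -> 0 <= v -> 0 <= D ->
  (forall x : R, (0 < x)%R -> x%:E < v -> (c * x)%:E <= D) -> c%:E * v <= D.
Proof.
move=> c0 + D0; case: v => [a| |] //; rewrite ?lee_fin => a0 H.
  move: a0; rewrite le_eqVlt => /predU1P[<-|a_gt0]; first by rewrite mule0.
  apply/lee_mul01Pr; first by rewrite -EFinM lee_fin mulr_ge0 // ltW.
  move=> s /andP[s0 s1]; rewrite -!EFinM mulrCA; apply: H.
    exact: mulr_gt0.
  by rewrite lte_fin gtr_pMl.
rewrite gt0_muley ?lte_fin //; case: D D0 H => [d| |] //= _ H; exfalso.
have x0 : (0 < `|d| / c + 1)%R by rewrite ltr_wpDl // divr_ge0 // ltW.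
have := H _ x0 (ltry _); rewrite lee_fin mulrDr mulrCA divff ?gt_eqF // mulr1.
by have := ler_norm d; lra.
Qed.

Section variable_exponent_norm.
Variables (R : realType) (n : nat) (mu : {measure set (n.-tuple R) -> \bar R}).
Implicit Types (p q r : n.-tuple R -> \bar R) (f g h : n.-tuple R -> R).

Lemma vnorm_ge0 p f : 0 <= vnorm mu p f.
Proof. by apply/ereal_infP => _ [l [l0 _] <-]; rewrite lee_fin ltW. Qed.

Lemma vnorm_le p f (lam : R) : (0 < lam)%R ->
  modular mu p (fun x => f x / lam)%R <= 1 -> vnorm mu p f <= lam%:E.
Proof. by move=> lam0 m1; apply: ereal_inf_lbound; exists lam. Qed.

Lemma vnorm_lt p f (t : R) : vnorm mu p f < t%:E ->
  exists2 lam : R, (0 < lam < t)%R & modular mu p (fun x => f x / lam)%R <= 1.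
Proof.
by move=> /ereal_inf_lt[_ [l [l0 m1] <-]]; rewrite lte_fin => lt; exists l; rewrite ?l0.
Qed.

Lemma modular_gt1 p f (lam : R) : (0 < lam)%R -> lam%:E < vnorm mu p f ->
  1 < modular mu p (fun x => f x / lam)%R.
Proof. by move=> lam0; apply: contraTT; rewrite -!leNgt; exact: vnorm_le. Qed.

Hypothesis mu_gt0 : 0 < mu setT.

Lemma modular_finE p h : (forall x, p x < +oo) ->
  modular mu p h = \int[mu]_x (`|h x| `^ fine (p x))%:E.
Proof.
move=> pfin; rewrite /modular.
have -> : [set x | p x < +oo] = setT by apply/seteqP; split => x // _; exact: pfin.
have -> : (fun x => if p x == +oo then (`|h x|)%:E else 0) = cst 0.
  by apply: funext => x; rewrite (lt_eqF (pfin x)).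
by rewrite ess_sup_cst // adde0.
Qed.

Lemma modular_le1_split q h : modular mu q h <= 1 ->
  \int[mu]_x (if (q x < +oo)%E then `|h x| `^ fine (q x) else 0)%:E <= 1 /\
  \forall x \ae mu, q x = +oo -> (`|h x| <= 1)%R.
Proof.
rewrite /modular; set I := \int[mu]_(x in _) _; set S := ess_sup _ _ => IS1.
have I0 : 0 <= I by apply: integral_ge0 => x _; rewrite lee_fin powR_ge0.
have S0 : 0 <= S.
  by apply: ess_sup_gee => //; apply: aeW => x; case: ifP; rewrite ?lee_fin.
split.
  rewrite (_ : \int[mu]_x _ = I); first by apply: le_trans IS1; exact: leeDl.
  rewrite /I [RHS]integral_mkcond; apply: eq_integral => x _; rewrite patchE.
  by case: (boolP (q x < +oo)) => qx; [rewrite mem_set | rewrite memNset //; apply/negP].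
have /ess_supP : S <= 1 by apply: le_trans IS1; exact: leeDr.
by apply: filterS => x + qx; rewrite qx eqxx lee_fin.
Qed.

Section holder.
Variables p q r : n.-tuple R -> \bar R.
Hypotheses (vp : var_exponent p) (vq : var_exponent q) (vr : var_exponent r).
Hypothesis einv_r : forall x, einv (r x) = (einv (p x) + einv (q x))%R.
Hypothesis p_fin : forall x, p x < +oo.

Let q_ge0 x : 0 <= q x. Proof. exact: le_trans lee01 (vq.2 x). Qed.

Let r_fin x : r x < +oo.
Proof. exact: einvD_lt_pinfty (vp.2 x) (p_fin x) (q_ge0 x) (einv_r x). Qed.

Lemma modular_mul_le1 f g (lf lg : R) :
  measurable_fun setT f -> measurable_fun setT g -> (0 < lf)%R -> (0 < lg)%R ->
  modular mu p (fun x => f x / lf)%R <= 1 -> modular mu q (fun x => g x / lg)%R <= 1 ->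
  modular mu r (fun x => f x * g x / (2 * (lf * lg)))%R <= 1.
Proof.
move=> mf mg lf0 lg0 intA /modular_le1_split[intB ae_g].
rewrite !modular_finE // in intA *.
set A := fun x => (`|f x / lf| `^ fine (p x))%R.
set B := fun x => if q x < +oo then (`|g x / lg| `^ fine (q x))%R else 0%R.
have mA : measurable_fun setT A.
  exact: measurable_fun_norm_powR (measurable_funM mf (measurable_cst _)) vp.1.
have mB : measurable_fun setT B.
  apply: (measurable_fun_ifT (f := fun x => q x < +oo)).
  - exact: measurable_fun_lte vq.1 (measurable_cst _).
  - exact: measurable_fun_norm_powR (measurable_funM mg (measurable_cst _)) vq.1.
  - exact: measurable_cst.
have A0 x : (0 <= A x)%R by exact: powR_ge0.
have B0 x : (0 <= B x)%R by rewrite /B; case: ifP => // _; exact: powR_ge0.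
apply: (@le_trans _ _ (\int[mu]_x ((2^-1 * (A x + B x))%R%:E))).
  apply: ae_ge0_le_integral => //.
  - apply/measurable_EFinP/measurable_fun_norm_powR => //; last exact: vr.1.
    exact: measurable_funM (measurable_funM mf mg) (measurable_cst _).
  - by move=> x _; rewrite lee_fin mulr_ge0 ?addr_ge0 ?invr_ge0.
  - by apply/measurable_EFinP; apply: measurable_funM => //; exact: measurable_funD.
  apply: filterS ae_g => x g1 _; rewrite lee_fin.
  have -> : (f x * g x / (2 * (lf * lg)) = 2^-1 * ((f x / lf) * (g x / lg)))%R.
    by field; rewrite ?gt_eqF.
  rewrite normrM (ger0_norm (_ : 0 <= 2^-1)%R) ?invr_ge0 ?ler0n // normrM.
  by apply: half_mul_powR_le => //; [exact: vp.2|exact: vq.2|exact: vr.2].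
under eq_integral do rewrite EFinM.
rewrite ge0_integralZl //; first last.
- by move=> x _; rewrite lee_fin addr_ge0.
- by apply/measurable_EFinP; exact: measurable_funD.
under eq_integral do rewrite EFinD.
rewrite ge0_integralD //; try by [move=> x _; rewrite lee_fin | exact/measurable_EFinP].
rewrite (le_trans (lee_wpmul2l _ (leeD intA intB))) ?lee_fin ?invr_ge0 //.
by rewrite mulVf.
Qed.

Lemma vnorm_mul_le_lt f g (a b : R) :
  measurable_fun setT f -> measurable_fun setT g ->
  vnorm mu p f < a%:E -> vnorm mu q g < b%:E ->
  vnorm mu r (fun x => f x * g x)%R <= (2 * (a * b))%:E.
Proof.
move=> mf mg /vnorm_lt[lf /andP[lf0 lfa] mod_f] /vnorm_lt[lg /andP[lg0 lgb] mod_g].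
apply: (@le_trans _ _ (2 * (lf * lg))%:E).
  by apply: vnorm_le; [rewrite !mulr_gt0 | exact: modular_mul_le1].
by rewrite lee_fin ler_pM2l // ler_pM // ltW.
Qed.

Lemma vnorm_mul_le f g : measurable_fun setT f -> measurable_fun setT g ->
  vnorm mu q g <= 1 -> vnorm mu r (fun x => f x * g x)%R <= 2%:E * vnorm mu p f.
Proof.
move=> mf mg g1; have := vnorm_ge0 p f.
case: (vnorm mu p f) (@vnorm_mul_le_lt f g) => [a| |] // lt_ab; last first.
  by move=> _; rewrite mulry gtr0_sg ?mul1e ?leey.
rewrite lee_fin => a0; apply/lee_addgt0Pr => e e0.
have ae4 : (0 < a + e / 4)%R by lra.
apply: (le_trans (lt_ab (a + e / 4)%R ((a + e / 2) / (a + e / 4))%R mf mg _ _)).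
- by rewrite lte_fin; lra.
- by apply: le_lt_trans g1 _; rewrite lte_fin ltr_pdivlMr // mul1r; lra.
- by rewrite [X in (2 * X)%R]mulrC divfK ?gt_eqF // -EFinM -EFinD lee_fin; lra.
Qed.

(* On [E] this is [2^-1 * a^(p/q) * M^(-1/q)] (with [1/oo = 0]), the equality
   case of Young's inequality: [(a * norming_fun a M E)^r] is proportional to [a^p]. *)
Definition norming_fun (a : n.-tuple R -> R) (M : R) (E : set (n.-tuple R)) x : R :=
  (2^-1 * (a x `^ (fine (p x) * einv (q x)) * M `^ (- einv (q x))) * \1_E x)%R.

Section norming_fun.
Variables (a : n.-tuple R -> R) (M : R) (E : set (n.-tuple R)).
Hypotheses (ma : measurable_fun setT a) (a_ge0 : forall x, (0 <= a x)%R) (mE : measurable E).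
Hypothesis intE : \int[mu]_x (a x `^ fine (p x) * \1_E x)%:E = M%:E.

Lemma norming_fun_ge0 x : (0 <= norming_fun a M E x)%R.
Proof. by rewrite !mulr_ge0 ?powR_ge0 ?invr_ge0 ?ler0n // indicE ler0n. Qed.

Lemma measurable_norming_fun : measurable_fun setT (norming_fun a M E).
Proof.
have miq := measurable_fun_einv vq.1 q_ge0.
apply: measurable_funM; last exact: measurable_indic.
apply: measurable_funM; first exact: measurable_cst.
apply: measurable_funM; apply: measurable_fun_powR => //.
  by apply: measurable_funM => //; exact: measurableT_comp vp.1.
exact: measurable_funN.
Qed.

Let F x := (a x `^ fine (p x) * \1_E x)%R.

Let F_ge0 x : (0 <= F x)%R.
Proof. by rewrite mulr_ge0 ?powR_ge0 // indicE ler0n. Qed.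

Let measurable_F : measurable_fun setT F.
Proof.
apply: measurable_funM; last exact: measurable_indic.
by apply: measurable_fun_powR => //; exact: measurableT_comp vp.1.
Qed.

Let integralZ_F c : (0 <= c)%R -> \int[mu]_x (c * F x)%:E = (c * M)%:E.
Proof.
move=> c0; under eq_integral do rewrite EFinM.
by rewrite ge0_integralZl //= ?intE //; [exact/measurable_EFinP | move=> x _; rewrite lee_fin].
Qed.

Lemma vnorm_norming_fun_le1 : (0 < M)%R -> vnorm mu q (norming_fun a M E) <= 1.
Proof.
move=> M0; set g := norming_fun a M E.
apply: vnorm_le ltr01 _.
rewrite (_ : (fun x => g x / 1)%R = g) /modular; last by apply: funext => x; rewrite divr1.
have int_le : \int[mu]_(x in [set x | q x < +oo]) (`|g x| `^ fine (q x))%:E <= (2^-1)%:E.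
  apply: (@le_trans _ _ (\int[mu]_x ((2^-1 / M) * F x)%:E)); last first.
    by rewrite integralZ_F ?divfK ?gt_eqF // divr_ge0 ?invr_ge0 // ltW.
  apply: (@le_trans _ _ (\int[mu]_(x in [set x | q x < +oo]) ((2^-1 / M) * F x)%:E)).
    apply: ge0_le_integral.
    - by rewrite -[X in measurable X]setTI; apply: measurable_lte => //; exact: vq.1.
    - by move=> x _; rewrite lee_fin powR_ge0.
    - apply: measurable_funS (_ : measurable_fun setT _) => //.
      apply/measurable_EFinP/measurable_fun_norm_powR; last exact: vq.1.
      exact: measurable_norming_fun.
    - apply: measurable_funS (_ : measurable_fun setT _) => //.
      by apply/measurable_EFinP/measurable_funM => //; exact: measurable_cst.
    move=> x /= qx; rewrite lee_fin ger0_norm ?norming_fun_ge0 //.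
    have [Q qQ Q1] := ge1_fin_EFin (vq.2 x) qx.
    rewrite /g /norming_fun /F qQ /= indicE; case: (x \in E) => /=.
      by rewrite !mulr1 mulrAC -mulrA; apply: norming_powR_le.
    by rewrite !mulr0 powR0 ?gt_eqF // (lt_le_trans ltr01 Q1).
  apply: ge0_subset_integral => //.
  - by rewrite -[X in measurable X]setTI; apply: measurable_lte => //; exact: vq.1.
  - by apply/measurable_EFinP/measurable_funM => //; exact: measurable_cst.
  - by move=> x _; rewrite lee_fin mulr_ge0 // divr_ge0 ?invr_ge0 // ltW.
have ess_le : ess_sup mu (fun x => if q x == +oo then (`|g x|)%:E else 0) <= (2^-1)%:E.
  apply/ess_supP; apply: aeW => x; case: ifPn => [/eqP qoo|_]; last by rewrite lee_fin.
  rewrite lee_fin ger0_norm ?norming_fun_ge0 // /g /norming_fun qoo /=.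
  by rewrite mulr0 oppr0 !powRr0 mulr1 indicE; case: (x \in E); rewrite ?mulr1 ?mulr0.
by rewrite (le_trans (leeD int_le ess_le)) // -EFinD lee_fin -div1r -splitr.
Qed.

Lemma vnorm_mul_norming_fun_ge f (lam : R) :
  measurable_fun setT f -> (0 < lam)%R -> (forall x, a x = `|f x / lam|%R) -> (1 < M)%R ->
  (lam / 2)%:E <= vnorm mu r (fun x => f x * norming_fun a M E x)%R.
Proof.
move=> mf lam0 aE M1; have M0 : (0 < M)%R by exact: lt_trans ltr01 M1.
apply/ereal_infP => _ [s [s0 mod_s] <-]; rewrite lee_fin leNgt; apply/negP => slt.
move: mod_s; apply/negP; rewrite -ltNge modular_finE //.
set k := (lam / (2 * s))%R.
have k1 : (1 < k)%R by rewrite /k ltr_pdivlMr ?mulr_gt0 // mul1r; lra.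
have k0 : (0 <= k)%R by exact: le_trans ler01 (ltW k1).
have kM0 : (0 <= k / M)%R by rewrite divr_ge0 // ltW.
apply: (@lt_le_trans _ _ k%:E); first by rewrite lte_fin.
rewrite -[in k%:E](divfK (lt0r_neq0 M0) k) -integralZ_F //.
apply: ge0_le_integral => //.
- by move=> x _; rewrite lee_fin mulr_ge0.
- by apply/measurable_EFinP/measurable_funM => //; exact: measurable_cst.
- apply/measurable_EFinP/measurable_fun_norm_powR; last exact: vr.1.
  apply: measurable_funM; last exact: measurable_cst.
  exact: measurable_funM mf measurable_norming_fun.
move=> x _; rewrite lee_fin.
have [Rr rR R1] := ge1_fin_EFin (vr.2 x) (r_fin x).
have [P pP P1] := ge1_fin_EFin (vp.2 x) (p_fin x).
have hR : (Rr^-1 = P^-1 + einv (q x))%R by move: (einv_r x); rewrite rR pP.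
rewrite /F /norming_fun rR pP /= indicE; case: (x \in E); last by rewrite !mulr0 powR_ge0.
rewrite !mulr1; set X := (a x `^ (P * einv (q x)) * M `^ (- einv (q x)))%R.
have X0 : (0 <= X)%R by rewrite mulr_ge0 ?powR_ge0.
have -> : (f x * (2^-1 * X) / s = (f x / lam) * (k * X))%R by rewrite /k; field; rewrite ?gt_eqF.
rewrite normrM (ger0_norm (mulr_ge0 k0 X0)) -aE.
rewrite mulrAC -mulrA (_ : a x * (k * X) = k * a x * X)%R; last by rewrite mulrCA mulrA.
apply: norming_mul_powR_ge => //.
- exact: ltW.
- exact: ltW.
- exact: lt_le_trans ltr01 P1.
- exact: einv_ge0.
Qed.

End norming_fun.

Lemma dual_vnorm_ge_half f (lam M : R) (E : set (n.-tuple R)) :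
  measurable_fun setT f -> measurable E -> (0 < lam)%R -> (1 < M)%R ->
  \int[mu]_x (`|f x / lam| `^ fine (p x) * \1_E x)%:E = M%:E ->
  (lam / 2)%:E <= dual_vnorm mu q r f.
Proof.
move=> mf mE lam0 M1 intE.
have ma : measurable_fun setT (fun x => `|f x / lam|)%R.
  exact: measurableT_comp (measurable_funM mf (measurable_cst _)).
have a_ge0 x : (0 <= `|f x / lam|)%R by [].
apply: le_trans (vnorm_mul_norming_fun_ge ma a_ge0 mE intE mf lam0 (fun=> erefl) M1) _.
apply: ereal_sup_ubound; exists (norming_fun (fun x => `|f x / lam|)%R M E) => //.
split; first exact: measurable_norming_fun.
by apply: vnorm_norming_fun_le1 => //; exact: lt_trans ltr01 M1.
Qed.

Lemma dual_vnorm_le f : measurable_fun setT f -> dual_vnorm mu q r f <= 2%:E * vnorm mu p f.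
Proof. by move=> mf; apply: ge_ereal_sup => _ [g [mg g1] <-]; exact: vnorm_mul_le. Qed.

End holder.

Lemma modular0 q : var_exponent q -> modular mu q (fun=> 0%R) = 0.
Proof.
move=> [_ q1]; rewrite /modular normr0.
rewrite (_ : (fun x => if q x == +oo then _ else _) = cst 0); last first.
  by apply: funext => x; case: ifP.
rewrite ess_sup_cst // adde0; apply: integral0_eq => x /= qx.
move: (q1 x) qx; case: (q x) => // Q; rewrite lee_fin /= => Q1 _.
by rewrite powR0 // gt_eqF // (lt_le_trans ltr01 Q1).
Qed.

Lemma dual_vnorm_ge0 q r f : var_exponent q -> 0 <= dual_vnorm mu q r f.
Proof.
move=> vq; apply: le_trans (vnorm_ge0 r (fun x => f x * 0)%R) _.
apply: ereal_sup_ubound; exists (fun=> 0%R) => //; split; first exact: measurable_cst.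
by apply: vnorm_le ltr01 _; under eq_fun do rewrite mul0r; rewrite modular0.
Qed.

End variable_exponent_norm.

Section sigma_finite_exhaustion.
Context d (T : measurableType d) (R : realType) (mu : {measure set T -> \bar R}).
Variables (F : T -> R) (E : (set T)^nat).
Hypotheses (mF : measurable_fun setT F) (F_ge0 : forall x, (0 <= F x)%R).
Hypotheses (mE : forall N, measurable (E N)) (ndE : forall N K, (N <= K)%N -> E N `<=` E K).
Hypothesis E_cover : \bigcup_N E N = setT.

Let g N x := (F x * \1_(E N) x)%:E.

Let measurable_g N : measurable_fun setT (g N).
Proof. by apply/measurable_EFinP/measurable_funM => //; exact: measurable_indic. Qed.

Let g_ge0 N x : setT x -> 0 <= g N x.
Proof. by move=> _; rewrite lee_fin mulr_ge0 // indicE ler0n. Qed.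

Let nd_g x : setT x -> {homo g^~ x : N K / (N <= K)%N >-> N <= K}.
Proof.
move=> _ N K NK; rewrite lee_fin ler_wpM2l // !indicE.
by case: (boolP (x \in E N)) => [/set_mem/(ndE NK)/mem_set ->|]; rewrite ?ler0n.
Qed.

Lemma nd_integral_indic :
  {homo (fun N => \int[mu]_x (F x * \1_(E N) x)%:E) : N K / (N <= K)%N >-> N <= K}.
Proof.
move=> N K NK; apply: ge0_le_integral.
- exact: measurableT.
- exact: g_ge0.
- exact: measurable_g.
- exact: measurable_g.
- by move=> x _; exact: nd_g.
Qed.

Lemma cvg_integral_indic :
  (fun N => \int[mu]_x (F x * \1_(E N) x)%:E) @ \oo --> \int[mu]_x (F x)%:E.
Proof.
have lim_g x : limn (g^~ x) = (F x)%:E.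
  apply: lim_near_cst => //; have [N0 _ EN0x] : (\bigcup_N E N) x by rewrite E_cover.
  near=> N; rewrite /g indicE mem_set ?mulr1 //; apply: ndE EN0x.
  by near: N; exists N0.
under [X in _ --> X]eq_integral do rewrite -lim_g.
exact: cvg_monotone_convergence.
Unshelve. all: by end_near.
Qed.

End sigma_finite_exhaustion.

(* Exhaust [T] by the sets [C N `&` [set x | F x <= N]], with [C] increasing of
   finite measure: their integrals are finite and tend to [\int F]. *)
Lemma sigma_finite_integral_gt d (T : measurableType d) (R : realType)
    (mu : {measure set T -> \bar R}) (F : T -> R) (c : R) :
  sigma_finite setT mu -> measurable_fun setT F -> (forall x, 0 <= F x)%R ->
  c%:E < \int[mu]_x (F x)%:E ->
  exists E M, [/\ measurable E, \int[mu]_x (F x * \1_E x)%:E = M%:E & (c < M)%R].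
Proof.
move=> /sigma_finiteP[C [CT ndC Cfin]] mF F0 cF.
pose E N := C N `&` F @^-1` `]-oo, N%:R]%classic.
have mE N : measurable (E N).
  apply: measurableI; first exact: (Cfin N).1.
  by rewrite -[X in measurable X]setTI; apply: mF => //; exact: measurable_itv.
have ndE N K : (N <= K)%N -> E N `<=` E K.
  move=> NK x [CNx /=]; rewrite in_itv /= => FN; have /subsetPset CNK := ndC _ _ NK.
  by split; [exact: CNK | rewrite /= in_itv /= (le_trans FN) // ler_nat].
have E_cover : \bigcup_N E N = setT.
  apply/seteqP; split => // x _; have [N0 _ CN0x] : (\bigcup_N C N) x by rewrite -CT.
  exists (maxn N0 (Num.truncn (F x)).+1) => //; split.
    by have /subsetPset := ndC _ _ (leq_maxl N0 (Num.truncn (F x)).+1); apply.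
  rewrite /= in_itv /=; apply/ltW/(lt_le_trans (truncnS_gt (F x))).
  by rewrite ler_nat leq_maxr.
have int_sup := cvg_unique (@ereal_hausdorff R)
  (cvg_integral_indic (mu := mu) mF F0 mE ndE E_cover)
  (ereal_nondecreasing_cvgn (nd_integral_indic mu mF F0 mE ndE)).
rewrite int_sup in cF; have [_ [N _ <-] c_lt] := ereal_sup_gt cF.
have int_fin : \int[mu]_x (F x * \1_(E N) x)%:E < +oo.
  apply: (@le_lt_trans _ _ (\int[mu]_x (N%:R * \1_(C N) x)%:E)).
    apply: ge0_le_integral => //.
    - by move=> x _; rewrite lee_fin mulr_ge0 // indicE ler0n.
    - by apply/measurable_EFinP/measurable_funM => //; exact: measurable_indic.
    - by apply/measurable_EFinP/measurable_funM => //; exact/measurable_indic/(Cfin N).1.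
    move=> x _; rewrite lee_fin !indicE.
    case: (boolP (x \in E N)) => [/set_mem [CNx /=]|]; last by rewrite mulr0 mulr_ge0.
    by rewrite in_itv /= mem_set // !mulr1.
  under eq_integral do rewrite EFinM.
  rewrite ge0_integralZl //; last exact/measurable_EFinP/measurable_indic/(Cfin N).1.
  have mCN := (Cfin N).1; rewrite integral_indic // setIT.
  have : mu (C N) \is a fin_num by rewrite ge0_fin_numE ?(Cfin N).2.
  by move=> /fineK <-; rewrite -EFinM ltry.
have int_fin_num : \int[mu]_x (F x * \1_(E N) x)%:E \is a fin_num.
  by rewrite ge0_fin_numE //; apply: integral_ge0 => x _; rewrite lee_fin mulr_ge0 // indicE ler0n.
exists (E N), (fine (\int[mu]_x (F x * \1_(E N) x)%:E)); split => //; first by rewrite fineK.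
by rewrite -lte_fin fineK.
Qed.

Section lebesgue_n.
Variables (R : realType) (n : nat) (mu : {measure set (n.-tuple R) -> \bar R}).
Hypothesis mu_lebesgue : is_lebesgue_n mu.

Definition cube (a b : R) : set (n.-tuple R) :=
  [set t | forall i : 'I_n, `[a, b]%classic (tnth t i)].

Lemma measurable_cube a b : measurable (cube a b).
Proof.
rewrite (_ : cube a b =
    \bigcap_(i in [set: 'I_n]) ((fun t : n.-tuple R => tnth t i) @^-1` `[a, b]%classic)).
  apply: fin_bigcap_measurable; first exact: finite_finset.
  move=> i _; rewrite -[X in measurable X]setTI.
  exact: (measurable_tnth i) measurableT _ (measurable_itv _).
by apply/seteqP; split => [t /= H i _|t /= H i]; exact: H.
Qed.

Lemma lebesgue_n_cube a b : mu (cube a b) \is a fin_num.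
Proof.
rewrite (@mu_lebesgue (fun=> `[a, b]%classic)) //.
apply: prode_fin_num => i _; rewrite lebesgue_measure_itv /=.
by case: ifP => // _; rewrite -EFinD.
Qed.

Lemma lebesgue_n_setT_gt0 : (0 < mu setT)%E.
Proof.
apply: (@lt_le_trans _ _ (mu (cube 0 1))).
  rewrite (@mu_lebesgue (fun=> `[0%R, 1%R]%classic)) // big1 ?lte01 // => i _.
  by rewrite lebesgue_measure_itv /= lte01 oppr0 adde0.
by apply: le_measure; rewrite ?inE //; exact: measurable_cube.
Qed.

Lemma lebesgue_n_sigma_finite : sigma_finite setT mu.
Proof.
exists (fun N => cube (- N%:R) N%:R).
  apply/seteqP; split => // t _.
  exists (Num.truncn (\sum_(i < n) `|tnth t i|)).+1 => // i.
  rewrite /= in_itv /= -ler_norml; apply/ltW/(le_lt_trans _ (truncnS_gt _)).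
  by rewrite (bigD1 i) //= lerDl sumr_ge0.
move=> N; split; first exact: measurable_cube.
by rewrite -ge0_fin_numE ?lebesgue_n_cube.
Qed.

End lebesgue_n.

Theorem mainTheorem10 (R : realType) (n : nat)
    (mu : {measure set (n.-tuple R) -> \bar R})
    (p q r : n.-tuple R -> \bar R) :
  is_lebesgue_n mu ->
  var_exponent p -> var_exponent q -> var_exponent r ->
  (forall x, einv (r x) = (einv (p x) + einv (q x))%R) ->
  ((forall x, r x < p x < +oo) \/
   ((forall x, r x <= p x < +oo) /\ ess_sup mu r < +oo)) ->
  exists c1 c2 : R, (0 < c1)%R /\ (0 < c2)%R /\
    forall f : n.-tuple R -> R, measurable_fun setT f ->
      c1%:E * vnorm mu p f <= dual_vnorm mu q r f /\
      dual_vnorm mu q r f <= c2%:E * vnorm mu p f.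
Proof.
move=> mu_lebesgue vp vq vr einv_r exponents.
have mu_gt0 := lebesgue_n_setT_gt0 mu_lebesgue.
have p_fin x : p x < +oo by case: exponents => [|[]] rp; case/andP: (rp x).
exists 2^-1%R, 2%R; split; first by rewrite invr_gt0.
split => // f mf; split; last exact: dual_vnorm_le.
apply: lee_pmul_of_lt; rewrite ?invr_gt0 ?vnorm_ge0 ?dual_vnorm_ge0 // => lam lam0 lt_lam.
have := modular_gt1 lam0 lt_lam; rewrite modular_finE // => int_gt1.
have mF := measurable_fun_norm_powR (measurable_funM mf (measurable_cst lam^-1%R)) vp.1.
have [E [M [mE intE M1]]] := sigma_finite_integral_gt
  (lebesgue_n_sigma_finite mu_lebesgue) mF (fun x => powR_ge0 _ _) int_gt1.
by rewrite mulrC; exact: dual_vnorm_ge_half intE.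
Qed.
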